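(* Let $0\le m\le n$, $x=(x_1,\dots,x_m)$, $y=(y_1,\dots,y_n)$. Then \[\omega(x,y;t)=t^{m(m-n)}(1-t)^m\sum_{\substack{l_1,\dots,l_m=1\\ l_i\ne l_j\ (i\ne j)}}^n\prod_{i=1}^m\frac{y_{l_i}}{x_i-ty_{l_i}}\prod_{\substack{i=1\\ i\ne l_1,\dots,l_m}}^n\prod_{j=1}^m\frac{y_i-ty_{l_j}}{y_i-y_{l_j}}\prod_{1\le i<j\le m}\frac{x_i-y_{l_j}}{x_i-ty_{l_j}}\cdot\frac{y_{l_i}-ty_{l_j}}{y_{l_i}-y_{l_j}}.\]
   Context: For $x=(x_1,\dots,x_m)$ and $y=(y_1,\dots,y_n)$, \[\omega(x,y;t)=\sum_{I\subseteq\{1,\dots,m\}}(-1)^{|I|}t^{\binom{|I|}{2}}\prod_{i\in I,\ j\in\{1,\dots,m\}\setminus I}\frac{x_i-tx_j}{x_i-x_j}\prod_{i\in I}\prod_{j=1}^n\frac{x_i-y_j}{x_i-ty_j}\] (a rational function; $\omega=1$ when $m=0$). *)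

From HB Require Import structures.
From mathcomp Require Import all_boot all_order all_algebra.
Set Implicit Arguments. Unset Strict Implicit. Unset Printing Implicit Defensive.
Import Order.TTheory GRing.Theory Num.Theory.
Local Open Scope ring_scope.

Definition omega (F : fieldType) (m n : nat) (x : 'I_m -> F) (y : 'I_n -> F)
    (t : F) : F :=
  \sum_(I : {set 'I_m})
    (-1) ^+ #|I| * t ^+ 'C(#|I|, 2)
    * (\prod_(i in I) \prod_(j in ~: I) ((x i - t * x j) / (x i - x j)))
    * (\prod_(i in I) \prod_(j < n) ((x i - y j) / (x i - t * y j))).

From HB Require Import structures.
From mathcomp Require Import all_boot all_order all_algebra.
From mathcomp Require Import ring zify.
Import Order.TTheory GRing.Theory Num.Theory.
Local Open Scope ring_scope.

Set Implicit Arguments. Unset Strict Implicit. Unset Printing Implicit Defensive.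

(* Both sides satisfy the same recursion in the length of x.  Write u for the
   last entry of x and x' for the others.  Splitting the subsets I according to
   whether they contain u turns omega(x, y) into a sum over subsets J of x' of
   the terms of omega(x', y), multiplied by
     prod_(i in J) (x_i - t u)/(x_i - u)  -  t^|J| B(u) prod_(w notin J) (u - t x_w)/(u - x_w),
   where B(v) = prod_j (v - y_j)/(v - t y_j).  Both products are expanded by
   partial fractions (the residues of a rational function of degree -1 add up to
   its leading coefficient): the first with poles at the x_j, the second, through
   B, with poles at the t y_k and the x_w.  The terms with poles at the x_j cancel
   each other after reindexing J -> J + {w}, and the poles at t y_k leave
     t^(n-1) omega(x, y) = t^(m-1) (1 - t) sum_k w_k omega(x', y without y_k)
   with explicit weights w_k.
   Splitting by the value k = l(m), the sum over injections l satisfies the same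
   recursion without the factor t^(m-n) (1 - t), and m(m-n) - (m-1)(m-n) = m - n. *)

Section PartialFractions.
Variable F : fieldType.

Lemma lagrange_interpolation (s : seq F) (p : {poly F}) :
  uniq s -> (size p <= size s)%N ->
  p = \sum_(a <- s) (p.[a] / \prod_(b <- s | b != a) (a - b))
                      *: \prod_(b <- s | b != a) ('X - b%:P).
Proof.
move=> s_uniq size_p.
set Q := fun a => \prod_(b <- s | b != a) ('X - b%:P).
have Q_at a b : (Q a).[b] = \prod_(c <- s | c != a) (b - c).
  by rewrite horner_prod; apply: eq_bigr => c _; rewrite hornerXsubC.
apply/eqP; rewrite -subr_eq0; apply/eqP/(roots_geq_poly_eq0 _ s_uniq).
- apply/allP => b b_s; rewrite /root hornerD hornerN horner_sum.
  have Qb_neq0 : \prod_(c <- s | c != b) (b - c) != 0.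
    by rewrite prodf_seq_neq0; apply/allP => c _; rewrite subr_eq0 eq_sym implybb.
  rewrite (bigD1_seq b) //= hornerZ Q_at divfK // big1_seq ?addr0 ?subrr //.
  move=> a /andP[a_b _]; rewrite hornerZ Q_at [X in _ * X](big_rem b) //= eq_sym a_b.
  by rewrite subrr mul0r mulr0.
- apply: leq_trans (size_polyD _ _) _; rewrite geq_max size_p size_polyN.
  apply: leq_trans (size_sum _ _ _) _; apply/bigmax_leqP_seq => a a_s _.
  apply: leq_trans (size_scale_leq _ _) _.
  rewrite -big_filter size_prod_XsubC -rem_filter // size_rem //.
  by case: (s) a_s.
Qed.

Lemma sum_lagrange_monic (s r : seq F) : uniq s -> size s = (size r).+1 ->
  \sum_(a <- s) \prod_(b <- r) (a - b) / \prod_(b <- s | b != a) (a - b) = 1.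
Proof.
move=> s_uniq size_s; set p := \prod_(b <- r) ('X - b%:P).
have size_p : size p = size s by rewrite size_prod_XsubC size_s.
have p_lead : p`_(size r) = 1.
  by have /monicP := monic_prod_XsubC r predT id; rewrite lead_coefE size_prod_XsubC.
have /(congr1 (coefp (size r))) := lagrange_interpolation s_uniq (eq_leq size_p).
rewrite /= p_lead coef_sum => sum1; rewrite [RHS]sum1; apply: eq_big_seq => a a_s.
have Q_lead : (\prod_(b <- s | b != a) ('X - b%:P))`_(size r) = 1.
  have /monicP := monic_prod_XsubC s (fun b => b != a) id.
  by rewrite lead_coefE -big_filter size_prod_XsubC -rem_filter // size_rem // size_s.
rewrite coefZ Q_lead mulr1 horner_prod.
by under [in RHS]eq_bigr do rewrite hornerXsubC.
Qed.

(* The residues of prod_i (X - z_i) / ((X - u) prod_i (X - p_i)) add up to 1. *)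
Lemma prod_ratio_partial_fraction (I : finType) (A : {set I}) (z p : I -> F) (u : F) :
  injective p -> (forall i, u != p i) ->
  \prod_(i in A) ((u - z i) / (u - p i))
  + \sum_(j in A) ((p j - z j) / (p j - u)
                   * \prod_(i in A :\ j) ((p j - z i) / (p j - p i))) = 1.
Proof.
move=> p_inj u_p; set r := [seq z i | i in A].
have s_uniq : uniq (u :: [seq p i | i in A]).
  rewrite /= map_inj_uniq ?enum_uniq // andbT.
  by apply/mapP => -[i _ u_pi]; have := u_p i; rewrite u_pi eqxx.
have /sum_lagrange_monic : size (u :: [seq p i | i in A]) = (size r).+1.
  by rewrite /= !size_map.
move=> /(_ s_uniq) sum1; rewrite -[RHS]sum1 big_cons /r; congr (_ + _).
  rewrite big_cons eqxx /= !big_map big_enum big_enum_cond prodf_div.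
  by congr (_ / _); apply: eq_bigl => i; rewrite eq_sym u_p andbT.
rewrite big_map big_enum; apply: eq_bigr => j A_j.
rewrite big_cons u_p !big_map big_enum big_enum_cond [in RHS](big_setD1 j) //=.
rewrite (eq_bigl (fun i => i \in A :\ j) (fun i => p j - p i)).
  by rewrite invfM mulrACA -prodf_div.
by move=> i; rewrite !inE (inj_eq p_inj) andbC.
Qed.

End PartialFractions.

Definition tratio (F : fieldType) (t a b : F) := (a - t * b) / (a - b).

Definition yfactor (F : fieldType) (K : finType) (t : F) (y : K -> F) (v : F) :=
  \prod_k ((v - y k) / (v - t * y k)).

Section TPartialFractions.
Variables (F : fieldType) (t : F).
Hypothesis t_neq0 : t != 0.

Lemma prod_tratio_partial_fraction (I : finType) (x : I -> F) (u : F) (J : {set I}) :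
  injective x -> (forall i, u != x i) ->
  \prod_(i in J) tratio t (x i) u
  = t ^+ #|J| - (1 - t) * \sum_(j in J) (x j / (u - x j)
                                         * \prod_(i in J :\ j) tratio t (x i) (x j)).
Proof.
move=> x_inj u_x; have := prod_ratio_partial_fraction J (fun i => x i / t) x_inj u_x.
have u_x' i : u - x i != 0 by rewrite subr_eq0.
have pole_u i : (u - x i / t) / (u - x i) = t^-1 * tratio t (x i) u.
  by rewrite /tratio; field; rewrite t_neq0 u_x' -oppr_eq0 opprB u_x'.
have pole_x j : j \in J ->
    (x j - x j / t) / (x j - u) * \prod_(i in J :\ j) ((x j - x i / t) / (x j - x i))
    = t^-1 ^+ #|J| * ((1 - t) * (x j / (u - x j)
                      * \prod_(i in J :\ j) tratio t (x i) (x j))).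
  move=> J_j; have -> : \prod_(i in J :\ j) ((x j - x i / t) / (x j - x i))
                  = t^-1 ^+ #|J :\ j| * \prod_(i in J :\ j) tratio t (x i) (x j).
    rewrite -prodrMl; apply: eq_bigr => i; rewrite !inE => /andP[i_j _].
    have x_ij : x i - x j != 0 by rewrite subr_eq0 (inj_eq x_inj).
    by rewrite /tratio; field; rewrite t_neq0 x_ij -oppr_eq0 opprB x_ij.
  rewrite (cardsD1 j J) J_j add1n exprS.
  move: (t^-1 ^+ _) (\prod_(i in J :\ j) _) => c P.
  by field; rewrite t_neq0 u_x' -oppr_eq0 opprB u_x'.
rewrite (eq_bigr _ (fun i _ => pole_u i)) (eq_bigr _ pole_x) prodrMl -mulr_sumr.
rewrite -mulrDr => /(congr1 (fun e => t ^+ #|J| * e)); rewrite mulrA -exprMn.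
by rewrite mulfV // expr1n mul1r mulr1 => <-; rewrite mulr_sumr addrK.
Qed.

Lemma yfactor_residue_ty (K I : finType) (y : K -> F) (x : I -> F) (u : F) (W : {set I}) k :
  injective y -> u != t * y k -> (forall w, x w != t * y k) ->
  t ^+ #|K| * ((t * y k - y k) / (t * y k - u)
               * (\prod_(i | i != k) ((t * y k - y i) / (t * y k - t * y i))
                  * \prod_(w in W) ((t * y k - t * x w) / (t * y k - x w))))
  = t ^+ #|W|.+1 * ((1 - t) * (y k / (u - t * y k)
      * \prod_(i | i != k) tratio t (y i) (y k)
      * \prod_(w in W) ((x w - y k) / (x w - t * y k)))).
Proof.
move=> y_inj u_y x_y.
have y_ratio : \prod_(i | i != k) ((t * y k - y i) / (t * y k - t * y i))
               = (t ^+ #|K|.-1)^-1 * \prod_(i | i != k) tratio t (y i) (y k).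
  rewrite -exprVn -(cardC1 k) -prodrMl; apply: eq_bigr => i i_k.
  rewrite /tratio; field.
  by rewrite !subr_eq0 (inj_eq (mulfI t_neq0)) !(inj_eq y_inj) i_k t_neq0 eq_sym i_k.
have x_ratio : \prod_(w in W) ((t * y k - t * x w) / (t * y k - x w))
               = t ^+ #|W| * \prod_(w in W) ((x w - y k) / (x w - t * y k)).
  rewrite -prodrMl; apply: eq_bigr => w _.
  have x_wk : x w - t * y k != 0 by rewrite subr_eq0.
  by field; rewrite x_wk -oppr_eq0 opprB x_wk.
have u_yk : u - t * y k != 0 by rewrite subr_eq0.
have tK : t ^+ #|K| = t * t ^+ #|K|.-1.
  by rewrite -exprS prednK //; apply/card_gt0P; exists k.
rewrite y_ratio x_ratio tK exprS.
have tK_neq0 : t ^+ #|K|.-1 != 0 by rewrite expf_neq0.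
move: (t ^+ #|K|.-1) tK_neq0 (t ^+ #|W|) => c c_neq0 d.
by field; rewrite c_neq0 u_yk -oppr_eq0 opprB u_yk.
Qed.

Lemma sum_yfactor_residues (K I : finType) (y : K -> F) (x : I -> F) (u : F) (W : {set I}) :
  injective y -> injective x -> (forall i, u != x i) -> (forall k, u != t * y k) ->
  (forall i k, x i != t * y k) ->
  yfactor t y u * \prod_(w in W) tratio t u (x w)
  + (\sum_k (t * y k - y k) / (t * y k - u)
       * (\prod_(i | i != k) ((t * y k - y i) / (t * y k - t * y i))
          * \prod_(w in W) ((t * y k - t * x w) / (t * y k - x w)))
     + \sum_(w in W) (x w - t * x w) / (x w - u)
         * (yfactor t y (x w) * \prod_(w' in W :\ w) tratio t (x w) (x w'))) = 1.
Proof.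
move=> y_inj x_inj u_x u_y x_y.
pose A : {set K + I} := [set i | if i is inr w then w \in W else true].
pose z i := match i with inl k => y k | inr w => t * x w end.
pose p i := match i with inl k => t * y k | inr w => x w end.
have p_inj : injective p.
  case=> [k|w] [k'|w'] /= /eqP; rewrite ?(inj_eq y_inj) ?(inj_eq x_inj).
  - by rewrite (inj_eq (mulfI t_neq0)) (inj_eq y_inj) => /eqP->.
  - by rewrite eq_sym (negbTE (x_y _ _)).
  - by rewrite (negbTE (x_y _ _)).
  - by move=> /eqP->.
have u_p i : u != p i by case: i.
rewrite -[RHS](prod_ratio_partial_fraction A z p_inj u_p) !big_sumType /=.
congr (_ * _ + (_ + _)); try by apply: eq_bigl => ?; rewrite inE.
- apply: eq_big => [k|k _]; first by rewrite inE.
  rewrite big_sumType /=; congr (_ * (_ * _)); apply: eq_bigl => i.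
    by rewrite !inE andbT.
  by rewrite !inE.
apply: eq_big => [w|w W_w]; first by rewrite inE.
by rewrite big_sumType /=; congr (_ * (_ * _)); apply: eq_bigl => i; rewrite !inE.
Qed.

Lemma yfactor_partial_fraction (K I : finType) (y : K -> F) (x : I -> F) (u : F)
    (W : {set I}) :
  injective y -> injective x -> (forall i, u != x i) -> (forall k, u != t * y k) ->
  (forall i k, x i != t * y k) ->
  t ^+ #|W|.+1 * ((1 - t) * \sum_k (y k / (u - t * y k)
      * \prod_(i | i != k) tratio t (y i) (y k)
      * \prod_(w in W) ((x w - y k) / (x w - t * y k))))
  = t ^+ #|K| * (1 - yfactor t y u * \prod_(w in W) tratio t u (x w)
      + (1 - t) * \sum_(w in W) (x w / (u - x w) * yfactor t y (x w)
                                 * \prod_(w' in W :\ w) tratio t (x w) (x w'))).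
Proof.
move=> y_inj x_inj u_x u_y x_y.
have residue_x w : (x w - t * x w) / (x w - u)
      * (yfactor t y (x w) * \prod_(w' in W :\ w) tratio t (x w) (x w'))
    = - ((1 - t) * (x w / (u - x w) * yfactor t y (x w)
                    * \prod_(w' in W :\ w) tratio t (x w) (x w'))).
  have x_wu : x w - u != 0 by rewrite subr_eq0 eq_sym.
  move: (yfactor t y (x w)) (\prod_(w' in W :\ w) _) => B T.
  by field; rewrite x_wu -oppr_eq0 opprB x_wu.
have := sum_yfactor_residues W y_inj x_inj u_x u_y x_y.
rewrite (eq_bigr _ (fun w _ => residue_x w)) sumrN -mulr_sumr => residues.
rewrite [in LHS]mulr_sumr [in LHS]mulr_sumr.
rewrite -(eq_bigr _ (fun k _ => yfactor_residue_ty W y_inj (u_y k) (x_y^~ k))).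
rewrite -[LHS]mulr_sumr; congr (_ * _).
by rewrite -[X in X - _ + _]residues; ring.
Qed.

End TPartialFractions.

Definition omega_term (F : fieldType) (I : finType) (t : F) (x g : I -> F) (J : {set I}) :=
  (-1) ^+ #|J| * t ^+ 'C(#|J|, 2) * \prod_(i in J) \prod_(j in ~: J) tratio t (x i) (x j)
  * \prod_(i in J) g i.

Lemma omegaE (F : fieldType) m n (x : 'I_m -> F) (y : 'I_n -> F) t :
  omega x y t = \sum_J omega_term t x (fun i => yfactor t y (x i)) J.
Proof. by []. Qed.

Section OmegaTerms.
Variables (F : fieldType) (I : finType) (t : F) (x : I -> F).

Lemma omega_termM (g h k : I -> F) (J : {set I}) : (forall i, g i = h i * k i) ->
  omega_term t x g J = omega_term t x h J * \prod_(i in J) k i.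
Proof. by move=> ghk; rewrite /omega_term (eq_bigr _ (fun i _ => ghk i)) big_split /=; ring. Qed.

Lemma omega_term_setU1 (g : I -> F) (J : {set I}) (w : I) : w \notin J ->
  omega_term t x g J * (t ^+ #|J| * g w * \prod_(j in ~: J :\ w) tratio t (x w) (x j))
  = - (omega_term t x g (w |: J) * \prod_(i in J) tratio t (x i) (x w)).
Proof.
move=> J_w; have CwJ : ~: (w |: J) = ~: J :\ w by rewrite setCU setDE setIC.
have split_C i : \prod_(j in ~: J) tratio t (x i) (x j)
               = tratio t (x i) (x w) * \prod_(j in ~: J :\ w) tratio t (x i) (x j).
  by rewrite (big_setD1 w) // inE.
rewrite /omega_term cardsU1 J_w add1n exprS binS bin1 exprD CwJ.
rewrite !big_setU1 //= (eq_bigr _ (fun i _ => split_C i)) big_split /=; ring.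
Qed.

Lemma sum_omega_term_setU1 (g h : I -> F) :
  \sum_(J : {set I}) omega_term t x g J
      * (t ^+ #|J| * \sum_(w in ~: J) (h w * g w
                                       * \prod_(j in ~: J :\ w) tratio t (x w) (x j)))
  = - \sum_(K : {set I}) omega_term t x g K
        * \sum_(j in K) (h j * \prod_(i in K :\ j) tratio t (x i) (x j)).
Proof.
have step J : omega_term t x g J
      * (t ^+ #|J| * \sum_(w in ~: J) (h w * g w
                                       * \prod_(j in ~: J :\ w) tratio t (x w) (x j)))
    = \sum_w (if w \notin J then
          - (h w * (omega_term t x g (w |: J) * \prod_(i in J) tratio t (x i) (x w)))
        else 0).
  rewrite mulr_sumr mulr_sumr -big_mkcond; apply: eq_big => [w|w]; rewrite inE //.
  by move=> J_w; rewrite -mulrN -omega_term_setU1 //; ring.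
rewrite (eq_bigr _ (fun J _ => step J)) exchange_big.
under [in RHS]eq_bigr => K _ do rewrite mulr_sumr big_mkcond.
rewrite [in RHS]exchange_big -sumrN; apply: eq_bigr => w _.
rewrite -!big_mkcond -sumrN [in RHS](reindex_onto (fun J => w |: J) (fun K => K :\ w)) /=.
  apply: eq_big => J; rewrite ?setU11 /=.
    apply/idP/eqP => [/setU1K //|<-]; by rewrite !inE eqxx.
  by move=> J_w; rewrite setU1K //; ring.
by move=> K; exact: setD1K.
Qed.

End OmegaTerms.

Definition omit (T : Type) n (k : 'I_n.+1) (y : 'I_n.+1 -> T) : 'I_n -> T :=
  fun i => y (lift k i).

Section LiftSets.
Variable m : nat.
Implicit Types J : {set 'I_m}.

Lemma mem_lift_imset J j : (lift ord_max j \in lift ord_max @: J) = (j \in J).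
Proof. by rewrite mem_imset //; apply: lift_inj. Qed.

Lemma max_notin_lift_imset J : ord_max \notin lift ord_max @: J.
Proof. by apply/imsetP => -[j _ /eqP]; rewrite (negbTE (neq_lift _ _)). Qed.

Lemma setC_lift_imset J : ~: (lift ord_max @: J) = ord_max |: lift ord_max @: ~: J.
Proof.
apply/setP => i; rewrite !inE; case: (unliftP ord_max i) => [j ->|->].
  by rewrite !mem_lift_imset inE eq_sym (negbTE (neq_lift _ _)).
by rewrite eqxx (negbTE (max_notin_lift_imset J)).
Qed.

Lemma setC_max_lift_imset J : ~: (ord_max |: lift ord_max @: J) = lift ord_max @: ~: J.
Proof.
apply/setP => i; rewrite !inE; case: (unliftP ord_max i) => [j ->|->].
  by rewrite !mem_lift_imset inE eq_sym (negbTE (neq_lift _ _)).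
by rewrite eqxx /= (negbTE (max_notin_lift_imset _)).
Qed.

Lemma sum_set_ord_recr (V : nmodType) (G : {set 'I_m.+1} -> V) :
  \sum_I G I = \sum_(J : {set 'I_m}) (G (lift ord_max @: J) + G (ord_max |: lift ord_max @: J)).
Proof.
have liftK (J : {set 'I_m}) : lift ord_max @^-1: (lift ord_max @: J) = J.
  by apply/setP => j; rewrite inE mem_lift_imset.
have liftK1 (J : {set 'I_m}) : lift ord_max @^-1: (ord_max |: lift ord_max @: J) = J.
  by apply/setP => j; rewrite !inE mem_lift_imset eq_sym (negbTE (neq_lift _ _)).
have preimK (I : {set 'I_m.+1}) :
    ord_max \notin I -> lift ord_max @: (lift ord_max @^-1: I) = I.
  move=> /negbTE I_max; apply/setP => i; case: (unliftP ord_max i) => [j ->|->].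
    by rewrite mem_lift_imset inE.
  by rewrite I_max (negbTE (max_notin_lift_imset _)).
have preimK1 (I : {set 'I_m.+1}) :
    ord_max \in I -> ord_max |: lift ord_max @: (lift ord_max @^-1: I) = I.
  move=> I_max; apply/setP => i; rewrite inE; case: (unliftP ord_max i) => [j ->|->].
    by rewrite mem_lift_imset !inE eq_sym (negbTE (neq_lift _ _)).
  by rewrite set11 I_max.
rewrite (bigID (fun I : {set _} => ord_max \in I)) /= addrC big_split /=; congr (_ + _).
  rewrite (reindex_onto (fun J => lift ord_max @: J) (fun I => lift ord_max @^-1: I)) /=.
    by apply: eq_bigl => J; rewrite max_notin_lift_imset liftK eqxx.
  exact: preimK.
rewrite (reindex_onto (fun J => ord_max |: lift ord_max @: J) (fun I => lift ord_max @^-1: I)) /=.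
  by apply: eq_bigl => J; rewrite setU11 liftK1 eqxx.
exact: preimK1.
Qed.

End LiftSets.

Section OmegaRecursion.
Variables (F : fieldType) (t : F) (m : nat).

Lemma prod_lift_imset (J : {set 'I_m}) (H : 'I_m.+1 -> F) :
  \prod_(i in lift ord_max @: J) H i = \prod_(i in J) H (lift ord_max i).
Proof. by rewrite big_imset //; apply: in2W; apply: lift_inj. Qed.

Lemma prod_setC_lift_imset (J : {set 'I_m}) (H : 'I_m.+1 -> F) :
  \prod_(i in ~: (lift ord_max @: J)) H i = H ord_max * \prod_(i in ~: J) H (lift ord_max i).
Proof.
by rewrite setC_lift_imset big_setU1 ?max_notin_lift_imset //= prod_lift_imset.
Qed.

Lemma sum_omega_term_recr (x g : 'I_m.+1 -> F) :
  \sum_I omega_term t x g I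
  = \sum_(J : {set 'I_m}) omega_term t (omit ord_max x) (omit ord_max g) J
      * (\prod_(i in J) tratio t (omit ord_max x i) (x ord_max)
         - t ^+ #|J| * g ord_max * \prod_(w in ~: J) tratio t (x ord_max) (omit ord_max x w)).
Proof.
rewrite sum_set_ord_recr; apply: eq_bigr => J _.
rewrite /omega_term /omit cardsU1 max_notin_lift_imset card_imset; last exact: lift_inj.
rewrite setC_max_lift_imset !big_setU1 ?max_notin_lift_imset //= !prod_lift_imset.
have inner : \prod_(i in J) \prod_(j in lift ord_max @: ~: J) tratio t (x (lift ord_max i)) (x j)
    = \prod_(i in J) \prod_(j in ~: J) tratio t (x (lift ord_max i)) (x (lift ord_max j)).
  by apply: eq_bigr => i _; rewrite prod_lift_imset.
under eq_bigr do rewrite prod_setC_lift_imset.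
rewrite inner big_split /= add1n exprS binS bin1 exprD; ring.
Qed.

End OmegaRecursion.

Definition last_weight (F : fieldType) (t : F) m n (x : 'I_m.+1 -> F) (y : 'I_n -> F)
    (k : 'I_n) : F :=
  y k / (x ord_max - t * y k) * \prod_(i | i != k) tratio t (y i) (y k)
  * \prod_(i < m) ((omit ord_max x i - y k) / (omit ord_max x i - t * y k)).

Section Recursion.
Variables (F : fieldType) (t : F).
Hypothesis t_neq0 : t != 0.

Lemma yfactor_omit n (y : 'I_n.+1 -> F) k v :
  yfactor t y v = (v - y k) / (v - t * y k) * yfactor t (omit k y) v.
Proof. by rewrite /yfactor (bigD1_ord k). Qed.

Lemma prod_mul_omega_omit m n (x : 'I_m -> F) (y : 'I_n.+1 -> F) k :
  \prod_(i < m) ((x i - y k) / (x i - t * y k)) * omega x (omit k y) t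
  = \sum_(J : {set 'I_m}) omega_term t x (fun i => yfactor t y (x i)) J
      * \prod_(w in ~: J) ((x w - y k) / (x w - t * y k)).
Proof.
rewrite omegaE mulr_sumr; apply: eq_bigr => J _.
have split_k i : yfactor t y (x i)
    = yfactor t (omit k y) (x i) * ((x i - y k) / (x i - t * y k)).
  by rewrite (yfactor_omit y k) mulrC.
have split_J : \prod_(i < m) ((x i - y k) / (x i - t * y k))
    = \prod_(i in J) ((x i - y k) / (x i - t * y k))
      * \prod_(i in ~: J) ((x i - y k) / (x i - t * y k)).
  rewrite (bigID (mem J)) /=; congr (_ * _).
  by apply: eq_bigl => i; rewrite !inE.
by rewrite (omega_termM _ _ _ split_k) split_J; ring.
Qed.

(* Summed against the terms of omega, the right-hand side vanishes by
   [sum_omega_term_setU1]. *)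
Lemma omega_recr_summand (I K : finType) (x : I -> F) (u : F) (y : K -> F)
    (J : {set I}) :
  injective x -> injective y -> (forall i, u != x i) -> (forall k, u != t * y k) ->
  (forall i k, x i != t * y k) ->
  t ^+ #|K| * (\prod_(i in J) tratio t (x i) u
               - t ^+ #|J| * yfactor t y u * \prod_(w in ~: J) tratio t u (x w))
  - t ^+ #|I|.+1 * ((1 - t) * \sum_k (y k / (u - t * y k)
        * \prod_(i | i != k) tratio t (y i) (y k)
        * \prod_(w in ~: J) ((x w - y k) / (x w - t * y k))))
  = - (t ^+ #|K| * (1 - t)
       * (\sum_(j in J) (x j / (u - x j) * \prod_(i in J :\ j) tratio t (x i) (x j))
          + t ^+ #|J| * \sum_(w in ~: J) (x w / (u - x w) * yfactor t y (x w)
                              * \prod_(w' in ~: J :\ w) tratio t (x w) (x w')))).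
Proof.
move=> x_inj y_inj u_x u_y x_y.
rewrite -(cardsC J) -addnS exprD -[t ^+ #|J| * t ^+ #|~: J|.+1 * _]mulrA.
rewrite (yfactor_partial_fraction t_neq0 (~: J) y_inj x_inj u_x u_y x_y).
by rewrite (prod_tratio_partial_fraction t_neq0 J x_inj u_x); ring.
Qed.

Lemma sum_last_weight_omega m n (x : 'I_m.+1 -> F) (y : 'I_n.+1 -> F) :
  \sum_k last_weight t x y k * omega (omit ord_max x) (omit k y) t
  = \sum_(J : {set 'I_m})
      omega_term t (omit ord_max x) (fun i => yfactor t y (omit ord_max x i)) J
      * \sum_k (y k / (x ord_max - t * y k) * \prod_(i | i != k) tratio t (y i) (y k)
                * \prod_(w in ~: J) ((omit ord_max x w - y k)
                                     / (omit ord_max x w - t * y k))).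
Proof.
have weighted k : last_weight t x y k * omega (omit ord_max x) (omit k y) t
    = \sum_(J : {set 'I_m})
        omega_term t (omit ord_max x) (fun i => yfactor t y (omit ord_max x i)) J
        * (y k / (x ord_max - t * y k) * \prod_(i | i != k) tratio t (y i) (y k)
           * \prod_(w in ~: J) ((omit ord_max x w - y k)
                                / (omit ord_max x w - t * y k))).
  have := prod_mul_omega_omit (omit ord_max x) y k; rewrite /last_weight => E.
  by rewrite -mulrA E mulr_sumr; apply: eq_bigr => J _; ring.
rewrite (eq_bigr _ (fun k _ => weighted k)) exchange_big.
by apply: eq_bigr => J _; rewrite mulr_sumr.
Qed.

Lemma omega_recr m n (x : 'I_m.+1 -> F) (y : 'I_n.+1 -> F) :
  injective x -> injective y -> (forall i j, x i != t * y j) ->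
  t ^+ n * omega x y t
  = t ^+ m * (1 - t)
    * \sum_k last_weight t x y k * omega (omit ord_max x) (omit k y) t.
Proof.
move=> x_inj y_inj x_y; set x' := omit ord_max x; set u := x ord_max.
have x'_inj : injective x' := inj_comp x_inj (@lift_inj _ ord_max).
have u_x' i : u != x' i by rewrite (inj_eq x_inj) neq_lift.
have x'_y i k : x' i != t * y k by exact: x_y.
set c := omega_term t x' (fun i => yfactor t y (x' i)).
pose P (J : {set 'I_m}) := \prod_(i in J) tratio t (x' i) u.
pose Q (J : {set 'I_m}) := \prod_(w in ~: J) tratio t u (x' w).
pose Phi (J : {set 'I_m}) := \sum_k (y k / (u - t * y k)
  * \prod_(i | i != k) tratio t (y i) (y k) * \prod_(w in ~: J) ((x' w - y k) / (x' w - t * y k))).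
pose R (J : {set 'I_m}) :=
  \sum_(j in J) (x' j / (u - x' j) * \prod_(i in J :\ j) tratio t (x' i) (x' j)).
pose S (J : {set 'I_m}) := \sum_(w in ~: J)
  (x' w / (u - x' w) * yfactor t y (x' w) * \prod_(w' in ~: J :\ w) tratio t (x' w) (x' w')).
have summand J :
  c J * (t ^+ n.+1 * (P J - t ^+ #|J| * yfactor t y u * Q J) - t ^+ m.+1 * ((1 - t) * Phi J))
  = - (t ^+ n.+1 * (1 - t)) * (c J * R J + c J * (t ^+ #|J| * S J)).
  have := omega_recr_summand J x'_inj y_inj u_x' (fun k => x_y _ k) x'_y.
  by rewrite !card_ord /R /S => ->; ring.
rewrite omegaE sum_omega_term_recr sum_last_weight_omega.
apply: (mulfI t_neq0); apply/eqP; rewrite -subr_eq0 !mulr_sumr -sumrB.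
rewrite (eq_bigr (fun J => c J * (t ^+ n.+1 * (P J - t ^+ #|J| * yfactor t y u * Q J)
                                  - t ^+ m.+1 * ((1 - t) * Phi J)))); last first.
  by move=> J _; rewrite /c /P /Q /Phi /x' /u /omit /= !exprS; ring.
rewrite (eq_bigr _ (fun J _ => summand J)) -mulr_sumr big_split /= /R /S /c.
by rewrite sum_omega_term_setU1 subrr mulr0.
Qed.

End Recursion.

Definition extend m n (k : 'I_n.+1) (l : {ffun 'I_m -> 'I_n}) : {ffun 'I_m.+1 -> 'I_n.+1} :=
  [ffun i => if unlift ord_max i is Some j then lift k (l j) else k].

Section Extend.
Variables (m n : nat) (k : 'I_n.+1) (l : {ffun 'I_m -> 'I_n}).

Lemma extend_max : extend k l ord_max = k.
Proof. by rewrite ffunE unlift_none. Qed.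

Lemma extend_lift j : extend k l (lift ord_max j) = lift k (l j).
Proof. by rewrite ffunE liftK. Qed.

Lemma injectiveb_extend : injectiveb (extend k l) = injectiveb l.
Proof.
apply/injectiveP/injectiveP => l_inj.
  by move=> a b eq_ab; apply/(@lift_inj _ ord_max)/l_inj; rewrite !extend_lift eq_ab.
move=> a b; case: (unliftP ord_max a) => [a' ->|->]; case: (unliftP ord_max b) => [b' ->|->];
  rewrite ?extend_max ?extend_lift //.
- by move/lift_inj/l_inj->.
- by move/eqP; rewrite eq_sym (negbTE (neq_lift _ _)).
- by move/eqP; rewrite (negbTE (neq_lift _ _)).
Qed.

Lemma mem_codom_extend_lift i : (lift k i \in codom (extend k l)) = (i \in codom l).
Proof.
apply/codomP/codomP => -[a].
  case: (unliftP ord_max a) => [a' ->|->]; rewrite ?extend_max ?extend_lift.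
    by move/lift_inj->; exists a'.
  by move/eqP; rewrite eq_sym (negbTE (neq_lift _ _)).
by move->; exists (lift ord_max a); rewrite extend_lift.
Qed.

Lemma mem_codom_extend : k \in codom (extend k l).
Proof. by apply/codomP; exists ord_max; rewrite extend_max. Qed.

End Extend.

Definition inj_term (F : fieldType) (t : F) m n (x : 'I_m -> F) (y : 'I_n -> F)
    (l : {ffun 'I_m -> 'I_n}) : F :=
  \prod_(i < m) (y (l i) / (x i - t * y (l i)))
  * \prod_(i < n | i \notin codom l) \prod_(j < m) tratio t (y i) (y (l j))
  * \prod_(i < m) \prod_(j < m | (i < j)%N)
      ((x i - y (l j)) / (x i - t * y (l j)) * tratio t (y (l i)) (y (l j))).

Section InjTerm.
Variables (F : fieldType) (t : F).

Lemma prod_neq_lift n (G : 'I_n.+1 -> F) k :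
  \prod_(i | i != k) G i = \prod_(i < n) G (lift k i).
Proof.
rewrite big_mkcond (bigD1_ord k) //= eqxx mul1r.
by apply: eq_bigr => i _; rewrite eq_sym neq_lift.
Qed.

Lemma prod_split_codom m n (l : {ffun 'I_m -> 'I_n}) (G : 'I_n -> F) : injective l ->
  \prod_i G i = \prod_(i | i \notin codom l) G i * \prod_j G (l j).
Proof.
move=> l_inj; rewrite (bigID (fun i => i \notin codom l)) /=; congr (_ * _).
rewrite (eq_bigl (mem (codom l))) => [|i]; last by rewrite negbK.
rewrite -big_uniq; first by rewrite codomE big_map enumT.
by rewrite codomE map_inj_uniq // enum_uniq.
Qed.

Variables (m n : nat) (x : 'I_m.+1 -> F) (y : 'I_n.+1 -> F) (k : 'I_n.+1).
Variable l : {ffun 'I_m -> 'I_n}.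

Lemma prod_extend_poles :
  \prod_(i < m.+1) (y (extend k l i) / (x i - t * y (extend k l i)))
  = \prod_(i < m) (omit k y (l i) / (omit ord_max x i - t * omit k y (l i)))
    * (y k / (x ord_max - t * y k)).
Proof.
rewrite (bigD1_ord ord_max) //= extend_max mulrC; congr (_ * _).
by apply: eq_bigr => i _; rewrite extend_lift.
Qed.

Lemma prod_extend_free :
  \prod_(i < n.+1 | i \notin codom (extend k l)) \prod_(j < m.+1) tratio t (y i) (y (extend k l j))
  = \prod_(i < n | i \notin codom l) \prod_(j < m) tratio t (omit k y i) (omit k y (l j))
    * \prod_(i < n | i \notin codom l) tratio t (omit k y i) (y k).
Proof.
rewrite -big_split big_mkcond (bigD1_ord k) //= mem_codom_extend mul1r [RHS]big_mkcond.
apply: eq_bigr => i _; rewrite mem_codom_extend_lift; case: (i \in codom l) => //=.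
rewrite (bigD1_ord ord_max) //= extend_max mulrC; congr (_ * _).
by apply: eq_bigr => j _; rewrite extend_lift.
Qed.

Lemma prod_extend_pairs :
  \prod_(i < m.+1) \prod_(j < m.+1 | (i < j)%N)
      ((x i - y (extend k l j)) / (x i - t * y (extend k l j))
       * tratio t (y (extend k l i)) (y (extend k l j)))
  = \prod_(i < m) \prod_(j < m | (i < j)%N)
        ((omit ord_max x i - omit k y (l j)) / (omit ord_max x i - t * omit k y (l j))
         * tratio t (omit k y (l i)) (omit k y (l j)))
    * (\prod_(i < m) ((omit ord_max x i - y k) / (omit ord_max x i - t * y k))
       * \prod_(i < m) tratio t (omit k y (l i)) (y k)).
Proof.
rewrite (bigD1_ord ord_max) // big_pred0 => [|j]; last by rewrite ltnNge -ltnS ltn_ord.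
rewrite Monoid.mul1m -!big_split; apply: eq_bigr => i _.
rewrite (bigD1_ord ord_max); last by rewrite lift_max ltn_ord.
rewrite Monoid.mulmC extend_max extend_lift; congr (_ * _).
by apply: eq_big => [j|j _]; rewrite ?lift_max // !extend_lift.
Qed.

Lemma inj_term_extend : injective l ->
  inj_term t x y (extend k l) = last_weight t x y k * inj_term t (omit ord_max x) (omit k y) l.
Proof.
move=> l_inj; rewrite /inj_term /last_weight prod_extend_poles prod_extend_free.
rewrite prod_extend_pairs prod_neq_lift (prod_split_codom _ l_inj) /omit /=.
ring.
Qed.

End InjTerm.

Section SumInjections.
Variables (F : fieldType) (t : F).
Hypothesis t_neq0 : t != 0.

Lemma sum_inj_term_recr m n (x : 'I_m.+1 -> F) (y : 'I_n.+1 -> F) : (m <= n)%N ->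
  \sum_(L : {ffun 'I_m.+1 -> 'I_n.+1} | injectiveb L) inj_term t x y L
  = \sum_k last_weight t x y k
      * \sum_(l : {ffun 'I_m -> 'I_n} | injectiveb l) inj_term t (omit ord_max x) (omit k y) l.
Proof.
move=> le_mn.
rewrite (partition_big (fun L : {ffun 'I_m.+1 -> 'I_n.+1} => L ord_max) xpredT) //=.
apply: eq_bigr => k _.
(* The default value [widen_ord le_mn j] is never used on injective [L]. *)
pose res (L : {ffun 'I_m.+1 -> 'I_n.+1}) : {ffun 'I_m -> 'I_n} :=
  [ffun j => odflt (widen_ord le_mn j) (unlift k (L (lift ord_max j)))].
rewrite (reindex_onto (extend k) res) /=; last first.
  move=> L /andP[/injectiveP L_inj /eqP L_k]; apply/ffunP => i.
  case: (unliftP ord_max i) => [j ->|->]; last by rewrite extend_max L_k.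
  rewrite extend_lift ffunE; case: unliftP => [j' -> //|L_j_k].
  have /eqP := L_inj _ _ (etrans L_j_k (esym L_k)).
  by rewrite eq_sym (negbTE (neq_lift _ _)).
rewrite mulr_sumr; apply: eq_big => l.
  have -> : res (extend k l) = l by apply/ffunP => j; rewrite ffunE extend_lift liftK.
  by rewrite injectiveb_extend extend_max !eqxx !andbT.
move=> /andP[/andP[]]; rewrite injectiveb_extend => /injectiveP l_inj _ _.
by rewrite inj_term_extend.
Qed.

Lemma omega0 n (x : 'I_0 -> F) (y : 'I_n -> F) : omega x y t = 1.
Proof.
rewrite omegaE (big_pred1 set0) => [|I]; last by apply/esym/eqP/setP => -[].
by rewrite /omega_term cards0 !big_set0 !mulr1.
Qed.

Lemma sum_inj_term0 n (x : 'I_0 -> F) (y : 'I_n -> F) :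
  \sum_(l : {ffun 'I_0 -> 'I_n} | injectiveb l) inj_term t x y l = 1.
Proof.
pose l0 : {ffun 'I_0 -> 'I_n} := [ffun i => widen_ord (leq0n n) i].
rewrite (big_pred1 l0) => [|l]; last first.
  by rewrite /= (_ : l == l0); [apply/injectiveP => -[] | apply/eqP/ffunP => -[]].
by rewrite /inj_term !big_ord0 big1 ?mulr1 // => i _; rewrite big_ord0.
Qed.

Lemma inj_omit (T : eqType) n (k : 'I_n.+1) (y : 'I_n.+1 -> T) :
  injective y -> injective (omit k y).
Proof. by move=> y_inj a b /y_inj/lift_inj. Qed.

Lemma omega_eq_sum_inj m n (x : 'I_m -> F) (y : 'I_n -> F) :
  (m <= n)%N -> injective x -> injective y -> (forall i j, x i != t * y j) ->
  omega x y t = t ^ (m%:Z * (m%:Z - n%:Z)) * (1 - t) ^+ m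
                * \sum_(l : {ffun 'I_m -> 'I_n} | injectiveb l) inj_term t x y l.
Proof.
elim: m n x y => [|m IH] n x y le_mn x_inj y_inj x_y.
  by rewrite omega0 sum_inj_term0 mul0r expr0z !mul1r.
case: n y le_mn y_inj x_y => [//|n] y le_mn y_inj x_y.
have IHk k : omega (omit ord_max x) (omit k y) t
    = t ^ (m%:Z * (m%:Z - n%:Z)) * (1 - t) ^+ m
      * \sum_(l : {ffun 'I_m -> 'I_n} | injectiveb l) inj_term t (omit ord_max x) (omit k y) l.
  by apply: IH => //; [apply: inj_omit | apply: inj_omit | move=> i j; apply: x_y].
have t_exp : t ^+ n * t ^ (m.+1%:Z * (m.+1%:Z - n.+1%:Z))
             = t ^+ m * t ^ (m%:Z * (m%:Z - n%:Z)).
  by rewrite !exprnP -!expfzDr //; congr (_ ^ _); lia.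
apply: (mulfI (expf_neq0 n t_neq0)).
rewrite omega_recr // sum_inj_term_recr // !mulrA t_exp.
under eq_bigr => k _ do rewrite IHk mulrCA.
by rewrite -mulr_sumr exprS; ring.
Qed.

End SumInjections.

Unset Implicit Arguments. Set Strict Implicit. Set Printing Implicit Defensive.

Theorem corollary3p5 (F : fieldType) (m n : nat) (x : 'I_m -> F)
    (y : 'I_n -> F) (t : F) :
  (m <= n)%N ->
  t != 0 ->
  injective x -> injective y ->
  (forall i j, x i != t * y j) ->
  omega x y t =
    t ^ (m%:Z * (m%:Z - n%:Z)) * (1 - t) ^+ m *
    \sum_(l : {ffun 'I_m -> 'I_n} | injectiveb l)
      ((\prod_(i < m) (y (l i) / (x i - t * y (l i))))
       * (\prod_(i < n | i \notin codom l)
            \prod_(j < m) ((y i - t * y (l j)) / (y i - y (l j))))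
       * (\prod_(i < m) \prod_(j < m | (i < j)%N)
            ((x i - y (l j)) / (x i - t * y (l j))
             * ((y (l i) - t * y (l j)) / (y (l i) - y (l j)))))).
Proof. by move=> le_mn t_neq0; apply: omega_eq_sum_inj. Qed.
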